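(* Let $K,F,Z,S$ be positive integers and let $\mathbf{P}=(p_{j,k})_{0\le j<F,\,0\le k<K}$ be a $(K,F,Z,S)$ placement delivery array. Suppose there is an integer $Z'$ such that every column of $\mathbf{P}$ contains exactly $Z'$ useless stars. Then, for any number $N$ of files, there exists an $(F-Z')$-division $(K,M,N)$ coded caching scheme with memory ratio $\frac{M}{N}=\frac{Z-Z'}{F-Z'}$ and transmission rate $R=\frac{S}{F-Z'}$. Moreover, its delivery consists of $S$ transmissions indexed by $s\in[0,S)$, each of the size of one packet, and the coded gain at each time slot $s$ is the same as in the scheme obtained from $\mathbf{P}$ by the standard PDA scheme; that is, transmission $s$ is the XOR of coded packets each of which is needed by a different user, and it simultaneously serves exactly as many users as the number of occurrences of the integer $s$ in $\mathbf{P}$.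
   Context: Notation: $[0,m)=\{0,1,\dots,m-1\}$. Placement delivery array (PDA): for positive integers $K,F,Z,S$, an $F\times K$ array $\mathbf{P}=(p_{j,k})$, $0\le j<F$, $0\le k<K$, whose entries are either a special symbol $*$ or integers in $[0,S)$, is a $(K,F,Z,S)$ PDA if (C1) the symbol $*$ appears exactly $Z$ times in each column; (C2) each integer in $[0,S)$ occurs at least once in the array; (C3) for any two distinct entries $p_{j_1,k_1}$ and $p_{j_2,k_2}$, $p_{j_1,k_1}=p_{j_2,k_2}=s$ with $s$ an integer only if $j_1\ne j_2$, $k_1\ne k_2$ and $p_{j_1,k_2}=p_{j_2,k_1}=*$. Useful/useless stars: a star entry $p_{j,k}=*$ is useful if there exist an integer $s\in[0,S)$, a column $k'$ with $p_{j,k'}=s$ and a row $j'$ with $p_{j',k}=s$ (i.e. the star lies in the square subarray formed by the rows and columns of the occurrences of $s$); otherwise it is useless. Standard PDA scheme: each file is split into $F$ packets $W_{n,j}$, $j\in[0,F)$; user $k$ caches $W_{n,j}$ for all $n$ and all $j$ with $p_{j,k}=*$; for demand vector $\mathbf{d}$, at time slot $s\in[0,S)$ the server sends $\bigoplus_{p_{j,k}=s}W_{d_k,j}$. The number of occurrences of $s$ in $\mathbf{P}$ is called the coded gain at time slot $s$. Coded caching model: a server holds $N$ files $W_0,\dots,W_{N-1}$ of equal size, connected by a shared error-free broadcast link to $K$ users, each with a cache of size $M$ files. An $F$-division $(K,M,N)$ coded caching scheme consists of: (placement) each file is split into $F$ equal-size packets and each user $k$ stores content $\mathcal{Z}_k$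 (packets or coded combinations of packets, possibly over a finite field) of total size at most $M$ files, without knowledge of the demands; (delivery) for each demand vector $\mathbf{d}=(d_0,\dots,d_{K-1})\in[0,N)^K$ (user $k$ requests $W_{d_k}$), the server broadcasts a signal of size $R_{\mathbf{d}}$ files such that every user $k$ can recover $W_{d_k}$ from the signal and $\mathcal{Z}_k$. The memory ratio is $M/N$ and the transmission rate is $R=\max_{\mathbf{d}}R_{\mathbf{d}}$. *)

From HB Require Import structures.
From mathcomp Require Import all_boot all_order all_algebra.
Set Implicit Arguments. Unset Strict Implicit. Unset Printing Implicit Defensive.
Import GRing.Theory Num.Theory.

(* A K x F array P with entries in {*} U [0,S): entry p_{j,k} is [P j k],
   where [None] stands for the star symbol and [Some s] for the integer s. *)
Definition pda_array (K F S : nat) := 'I_F -> 'I_K -> option 'I_S.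

Definition is_PDA (K F Z S : nat) (P : pda_array K F S) : Prop :=
  (forall k : 'I_K, #|[set j : 'I_F | P j k == None]| = Z) /\
  (forall s : 'I_S, exists (j : 'I_F) (k : 'I_K), P j k = Some s) /\
  (forall (j1 j2 : 'I_F) (k1 k2 : 'I_K) (s : 'I_S),
              (j1, k1) != (j2, k2) -> P j1 k1 = Some s -> P j2 k2 = Some s ->
              [/\ j1 != j2, k1 != k2, P j1 k2 = None & P j2 k1 = None]).

Definition useful_star (K F S : nat) (P : pda_array K F S) (j : 'I_F) (k : 'I_K) : bool :=
  (P j k == None) &&
  [exists s : 'I_S, exists k' : 'I_K, exists j' : 'I_F,
      (P j k' == Some s) && (P j' k == Some s)].

Definition useless_star (K F S : nat) (P : pda_array K F S) (j : 'I_F) (k : 'I_K) : bool :=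
  (P j k == None) && ~~ useful_star P j k.

(* An Fp-division scheme for N files: each file is a vector of Fp packets,
   so the library is  W : 'I_N -> 'I_Fp -> A.
   Placement: user k stores  cache k W : 'I_C -> A  (C packet-sized symbols,
   arbitrary -- possibly coded -- functions of the whole library, independent
   of the demands); its memory is M = C / Fp files.
   Delivery: for demand d : 'I_K -> 'I_N the server broadcasts
   deliver d W : 'I_T -> A, i.e. T transmissions of one packet each, so that
   R_d = T / Fp for every d. *)
Definition files (A : Type) (N Fp : nat) := 'I_N -> 'I_Fp -> A.

Definition coded_caching_scheme (A : Type) (K N Fp C T : nat)
  (cache : 'I_K -> files A N Fp -> 'I_C -> A)
  (deliver : ('I_K -> 'I_N) -> files A N Fp -> 'I_T -> A) : Prop :=
  forall (d : 'I_K -> 'I_N) (k : 'I_K),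
    exists dec : ('I_C -> A) -> ('I_T -> A) -> 'I_Fp -> A,
      forall (W : files A N Fp) (i : 'I_Fp), dec (cache k W) (deliver d W) i = W (d k) i.

Definition memory_ratio (N Fp C : nat) : rat := (C%:R / Fp%:R) / N%:R.
Definition trans_rate (Fp T : nat) : rat := T%:R / Fp%:R.

(* Work over a prime field with more than F elements and read a file of F - Z'
   symbols as the coefficients of a polynomial of degree < F - Z'; coded packet j
   is its value at the j-th point (a Reed-Solomon code).  User k caches, for every
   file, the packets at the Z - Z' useful-star rows of column k.  If s = p_{j,k},
   every other summand of transmission s sits at a row j' with p_{j',k} = * that is
   useful (condition C3), so user k cancels it and learns its packet j.  It then
   knows its file at all F - Z' rows of column k that are not useless stars, which
   determines the polynomial.  Packet j itself is not a function of the cache: some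
   polynomial of degree < F - Z' vanishes at the Z - Z' cached points but not at j. *)

From HB Require Import structures.
From mathcomp Require Import all_boot all_order all_algebra.
From Stdlib Require Import ClassicalEpsilon FunctionalExtensionality.
Import GRing.Theory Num.Theory.
Set Implicit Arguments. Unset Strict Implicit. Unset Printing Implicit Defensive.

Lemma factor_through (X Y V : Type) (v0 : V) (f : X -> Y) (g : X -> V) :
  (forall x x', f x = f x' -> g x = g x') ->
  exists h : Y -> V, forall x, h (f x) = g x.
Proof.
move=> fg; pose Q y v := exists x, f x = y /\ g x = v.
exists (fun y => epsilon (inhabits v0) (Q y)) => x.
have Qfx : exists v, Q (f x) v by exists (g x), x.
have [x' [ff' <-]] := epsilon_spec (inhabits v0) (Q (f x)) Qfx.
exact: fg.
Qed.

Section ReedSolomon.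
Local Open Scope ring_scope.
Variables (A : fieldType) (F n : nat) (a : 'I_F -> A).
Hypothesis a_inj : injective a.

Definition rs_poly (w : 'I_n -> A) : {poly A} := \sum_(i < n) w i *: 'X^i.

Definition rs_encode (j : 'I_F) (w : 'I_n -> A) : A := (rs_poly w).[a j].

Lemma coef_rs_poly w (i : 'I_n) : (rs_poly w)`_i = w i.
Proof. by rewrite coef_sumMXn (big_pred1 i). Qed.

Lemma size_rs_poly w : (size (rs_poly w) <= n)%N.
Proof.
apply/leq_sizeP => k le_n_k; rewrite coef_sumMXn big_pred0 // => i /=.
by apply: contraTF le_n_k => /eqP <-; rewrite -ltnNge.
Qed.

Lemma rs_polyK (q : {poly A}) : (size q <= n)%N -> rs_poly (fun i => q`_i) = q.
Proof.
move=> le_q_n; rewrite /rs_poly -(poly_def n (fun i => q`_i)).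
apply/polyP => k; rewrite coef_poly.
by case: ltnP => // le_n_k; rewrite nth_default // (leq_trans le_q_n).
Qed.

Lemma rs_encode_inj (X : {set 'I_F}) (w w' : 'I_n -> A) : (n <= #|X|)%N ->
  {in X, forall j, rs_encode j w = rs_encode j w'} -> w =1 w'.
Proof.
move=> le_n_X ww' i; pose p := rs_poly w - rs_poly w'.
suff p0 : p = 0 by rewrite -!coef_rs_poly; apply/eqP; rewrite -subr_eq0 -coefB -/p p0 coef0.
apply: (@roots_geq_poly_eq0 _ _ [seq a j | j <- enum X]).
- apply/allP => x /mapP[j]; rewrite mem_enum => /ww' e ->.
  by rewrite /root hornerD hornerN -!/(rs_encode j _) e subrr.
- by rewrite map_inj_uniq ?enum_uniq.
rewrite size_map -cardE (leq_trans _ le_n_X) // (leq_trans (size_polyD _ _)) //.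
by rewrite size_polyN geq_max !size_rs_poly.
Qed.

Lemma rs_encode_separation (Y : {set 'I_F}) (j : 'I_F) : j \notin Y -> (#|Y| < n)%N ->
  exists w : 'I_n -> A, {in Y, forall y, rs_encode y w = 0} /\ rs_encode j w != 0.
Proof.
move=> jY ltYn; pose q : {poly A} := \prod_(x <- [seq a y | y <- enum Y]) ('X - x%:P).
have le_q_n : (size q <= n)%N by rewrite size_prod_XsubC size_map -cardE.
exists (fun i => q`_i); rewrite /rs_encode rs_polyK //; split.
  by move=> y yY; apply/rootP; rewrite root_prod_XsubC map_f ?mem_enum.
rewrite -rootE root_prod_XsubC; apply: contra jY => /mapP[y].
by rewrite mem_enum => + /a_inj ->.
Qed.

End ReedSolomon.

Lemma memory_ratio_mul (N Fp m : nat) : (0 < N)%N ->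
  memory_ratio N Fp (N * m) = (m%:R / Fp%:R)%R.
Proof.
move=> N_gt0; rewrite /memory_ratio natrM mulrAC [(N%:R * _)%R]mulrC mulfK //.
by rewrite pnatr_eq0 -lt0n.
Qed.

Lemma natr_Fp_ord_inj (p F : nat) : prime p -> (F < p)%N ->
  injective (fun j : 'I_F => (j%:R : 'F_p)%R).
Proof.
move=> p_prime lt_F_p j j' /(congr1 val); rewrite /= !val_Fp_nat //.
have lt_p (i : 'I_F) : (i < p)%N := ltn_trans (ltn_ord i) lt_F_p.
by rewrite !modn_small ?lt_p //; apply: ord_inj.
Qed.

Section UsefulStars.
Variables (K F Z S : nat) (P : pda_array K F S).
Hypothesis P_PDA : is_PDA Z P.

Lemma card_useful_useless (k : 'I_K) :
  #|[set j | useful_star P j k]| + #|[set j | useless_star P j k]| = Z.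
Proof.
have [C1 _] := P_PDA.
rewrite -(C1 k) -(cardsID [set j | useful_star P j k] [set j | P j k == None]).
congr (_ + _); apply: eq_card => j; rewrite !inE.
  by rewrite /useful_star; case: (P j k == None).
by rewrite /useless_star andbC.
Qed.

Lemma useful_star_collision (j j' : 'I_F) (k k' : 'I_K) (s : 'I_S) :
  P j k = Some s -> P j' k' = Some s -> (j', k') != (j, k) -> useful_star P j' k.
Proof.
move=> Pjk Pjk' ne; have [_ [_ C3]] := P_PDA.
have [_ _ Pj'k _] := C3 j' j k' k s ne Pjk' Pjk.
rewrite /useful_star Pj'k eqxx /=.
apply/existsP; exists s; apply/existsP; exists k'; apply/existsP; exists j.
by rewrite Pjk Pjk' !eqxx.
Qed.

End UsefulStars.

Section PlacementDelivery.
Local Open Scope ring_scope.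
Variables (K F Z S : nat) (P : pda_array K F S) (Z' : nat).
Hypothesis P_PDA : is_PDA Z P.
Hypothesis card_useless : forall k : 'I_K, #|[set j | useless_star P j k]| = Z'.
Variables (A : fieldType) (a : 'I_F -> A) (N : nat) (j0 : 'I_F).
Hypothesis a_inj : injective a.

Local Notation useful k := [set j | useful_star P j k].
Local Notation encode := (@rs_encode A F (F - Z') a).

Lemma card_useful (k : 'I_K) : #|useful k| = (Z - Z')%N.
Proof. by rewrite -(card_useful_useless P_PDA k) card_useless addnK. Qed.

Lemma card_not_useless (k : 'I_K) : #|[set j | ~~ useless_star P j k]| = (F - Z')%N.
Proof.
have := cardsC [set j | useless_star P j k]; rewrite card_ord card_useless => cardF.
by rewrite -[in RHS]cardF addKn; apply: eq_card => j; rewrite !inE.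
Qed.

Definition pda_cache_matrix (k : 'I_K) (W : files A N (F - Z')) : 'M[A]_(N, Z - Z') :=
  \matrix_(i, r) encode (nth j0 (enum (useful k)) r) (W i).

Definition pda_cache (k : 'I_K) (W : files A N (F - Z')) : 'I_(N * (Z - Z')) -> A :=
  mxvec (pda_cache_matrix k W) 0.

Definition pda_deliver (d : 'I_K -> 'I_N) (W : files A N (F - Z')) (s : 'I_S) : A :=
  \sum_(jk : 'I_F * 'I_K | P jk.1 jk.2 == Some s) encode jk.1 (W (d jk.2)).

Lemma eq_pda_cache (k : 'I_K) (W W' : files A N (F - Z')) :
  pda_cache k W = pda_cache k W' <->
  {in useful k, forall j i, encode j (W i) = encode j (W' i)}.
Proof.
have size_useful : size (enum (useful k)) = (Z - Z')%N by rewrite -cardE card_useful.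
split=> [eqWW' j jU i | eqWW'].
  have ltjZ : (index j (enum (useful k)) < Z - Z')%N.
    by rewrite -size_useful index_mem mem_enum.
  have /matrixP/(_ i (Ordinal ltjZ)) : pda_cache_matrix k W = pda_cache_matrix k W'.
    by apply: (can_inj mxvecK); apply/rowP => x; rewrite /pda_cache in eqWW'; rewrite eqWW'.
  by rewrite !mxE /= nth_index ?mem_enum.
rewrite /pda_cache; congr (mxvec _ 0); apply/matrixP => i r; rewrite !mxE eqWW' //.
by rewrite -mem_enum mem_nth // size_useful.
Qed.

Lemma packet_from_transmission (d : 'I_K -> 'I_N) (j : 'I_F) (k : 'I_K) (s : 'I_S)
    (W W' : files A N (F - Z')) :
  P j k = Some s -> pda_cache k W = pda_cache k W' ->
  pda_deliver d W s = pda_deliver d W' s ->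
  encode j (W (d k)) = encode j (W' (d k)).
Proof.
move=> Pjk /eq_pda_cache eqU.
have deliverD1 W0 : pda_deliver d W0 s = encode j (W0 (d k)) +
    \sum_(jk | (P jk.1 jk.2 == Some s) && (jk != (j, k))) encode jk.1 (W0 (d jk.2)).
  by rewrite /pda_deliver (bigD1 (j, k)) /= ?Pjk.
rewrite !deliverD1 (eq_bigr (fun jk => encode jk.1 (W' (d jk.2)))) => [/addIr // |].
move=> [j' k'] /= /andP[/eqP Pjk' ne].
by apply: eqU; rewrite inE (useful_star_collision P_PDA Pjk Pjk' ne).
Qed.

Lemma file_from_cache_delivery (d : 'I_K -> 'I_N) (k : 'I_K) (W W' : files A N (F - Z')) :
  pda_cache k W = pda_cache k W' -> pda_deliver d W = pda_deliver d W' ->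
  W (d k) =1 W' (d k).
Proof.
move=> eqC eqD; apply: (rs_encode_inj a_inj (X := [set j | ~~ useless_star P j k])).
  by rewrite card_not_useless.
move=> j; rewrite inE /useless_star negb_and negbK.
case Pjk: (P j k) => [s|] /= usefulj.
  by apply: packet_from_transmission Pjk eqC _; rewrite eqD.
by move/eq_pda_cache: eqC; apply; rewrite inE.
Qed.

Lemma packet_not_cached (k : 'I_K) (j : 'I_F) (s : 'I_S) (i : 'I_N) : P j k = Some s ->
  ~ exists h : ('I_(N * (Z - Z')) -> A) -> A, forall W, h (pda_cache k W) = encode j (W i).
Proof.
move=> Pjk [h hW].
have jNU : j \notin useful k by rewrite inE /useful_star Pjk.
have ltUn : (#|useful k| < F - Z')%N.
  rewrite -(card_not_useless k); apply: proper_card; apply/properP; split.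
    by apply/subsetP => j'; rewrite !inE /useless_star => ->; rewrite andbF.
  by exists j; rewrite // inE /useless_star Pjk.
have [w [w_useful w_j]] := rs_encode_separation a_inj jNU ltUn.
have encode0 j' : encode j' (fun=> 0) = 0.
  by rewrite /rs_encode /rs_poly big1 ?horner0 // => i' _; rewrite scale0r.
have eqC : pda_cache k (fun _ _ => 0) = pda_cache k (fun=> w).
  by apply/eq_pda_cache => j' j'U i'; rewrite encode0 w_useful.
by move: w_j; rewrite -(hW (fun=> w)) -eqC hW encode0 eqxx.
Qed.

End PlacementDelivery.

Theorem theorem2 (K F Z S : nat) (P : pda_array K F S) (Z' N : nat) :
  0 < K -> 0 < F -> 0 < Z -> 0 < S ->
  is_PDA Z P ->
  (forall k : 'I_K, #|[set j : 'I_F | useless_star P j k]| = Z') ->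
  0 < N ->
  exists (A : finFieldType) (C : nat)
         (cache : 'I_K -> files A N (F - Z') -> 'I_C -> A)
         (deliver : ('I_K -> 'I_N) -> files A N (F - Z') -> 'I_S -> A)
         (c : 'I_F -> ('I_(F - Z') -> A) -> A),
    [/\ coded_caching_scheme cache deliver,
        memory_ratio N (F - Z') C = ((Z - Z')%N%:R / (F - Z')%N%:R)%R,
        trans_rate (F - Z') S = (S%:R / (F - Z')%N%:R)%R,
        (* transmission s is the sum (XOR) of one coded packet per occurrence
           (j,k) of s in P, namely the coded packet c j of the file demanded by k *)
        (forall (d : 'I_K -> 'I_N) (W : files A N (F - Z')) (s : 'I_S),
            deliver d W s =
            (\sum_(jk : 'I_F * 'I_K | P jk.1 jk.2 == Some s) c jk.1 (W (d jk.2)))%R)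
      & (* each such coded packet is needed by its user k (not computable from
           its cache) and is recovered by k from its cache and transmission s *)
        (forall (d : 'I_K -> 'I_N) (j : 'I_F) (k : 'I_K) (s : 'I_S),
            P j k = Some s ->
            (exists g : ('I_C -> A) -> A -> A,
                forall W : files A N (F - Z'), g (cache k W) (deliver d W s) = c j (W (d k)))
            /\ ~ (exists h : ('I_C -> A) -> A,
                forall W : files A N (F - Z'), h (cache k W) = c j (W (d k))))].
Proof.
move=> _ F_gt0 _ _ P_PDA card_useless N_gt0.
have [p lt_F_p p_prime] := prime_above F.
pose a (j : 'I_F) : 'F_p := (j%:R)%R.
have a_inj : injective a := natr_Fp_ord_inj p_prime lt_F_p.
pose placement := @pda_cache K F Z S P Z' _ a N (Ordinal F_gt0).
pose delivery := @pda_deliver K F S P Z' _ a N.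
exists 'F_p, (N * (Z - Z')), placement, delivery, (rs_encode a).
split => //.
- move=> d k.
  have [dec decE] : exists dec, forall W, dec (placement k W, delivery d W) = W (d k).
    apply: (factor_through (fun=> 0%R)) => W W' [eqC eqD].
    apply: functional_extensionality.
    exact: (file_from_cache_delivery P_PDA card_useless a_inj eqC eqD).
  by exists (fun c t => dec (c, t)) => W i; rewrite decE.
- exact: memory_ratio_mul.
move=> d j k s Pjk; split; last first.
  exact: (packet_not_cached P_PDA card_useless a_inj Pjk).
have [g gE] : exists g,
    forall W, g (placement k W, delivery d W s) = rs_encode a j (W (d k)).
  apply: (factor_through 0%R) => W W' [eqC eqD].
  exact: (packet_from_transmission P_PDA card_useless Pjk eqC eqD).
by exists (fun c t => g (c, t)).
Qed.
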